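(* For every $\delta\in(0,1/6)$, $\mathbb P$-a.s. for all $N$ large enough there exist radii $(\rho_x)_{x\in\mathbb H_N}$ with $1\le\rho_x\le N^{3\delta}$ such that for all $x\in\mathbb H_N$ and all $y\in\partial B(x,\rho_x)$ one has $\tau_y\le 2^{\frac12N^{1-\delta}}$.
   Context: $\mathbb H_N=\{-1,1\}^N$ with Hamming distance $d$; $B(x,r)=\{y:d(x,y)\le r\}$, $\partial B(x,r)=\{y:d(x,y)=r\}$. $(E_x)_{x\in\mathbb H_N,N\ge1}$ i.i.d. standard Gaussians on $(\Omega,\mathcal F,\mathbb P)$; $\beta>0$; $\tau_x=e^{\beta\sqrt NE_x}$. ''$\mathbb P$-a.s. for $N$ large enough'' means: for $\mathbb P$-a.e. realization there is $N_0$ such that the statement holds for all $N\ge N_0$. *)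

From HB Require Import structures.
From mathcomp Require Import all_boot all_order all_algebra.
From mathcomp Require Import all_classical all_reals all_analysis.
Set Implicit Arguments. Unset Strict Implicit. Unset Printing Implicit Defensive.
Import Order.TTheory GRing.Theory Num.Theory.
Local Open Scope classical_set_scope.
Local Open Scope ring_scope.

(* The hypercube H_N = {-1,1}^N, encoded as boolean functions on 'I_N
   (true <-> +1, false <-> -1). *)
Definition cube (N : nat) := {ffun 'I_N -> bool}.

Definition hamming (N : nat) (x y : cube N) : nat := #|[pred i | x i != y i]|.

Definition cube_index := {N : nat & cube N}.

Definition mutually_independent d (T : measurableType d) (R : realType)
  (P : probability T R) (I : eqType) (X : I -> T -> R) : Prop :=
  forall (J : seq I) (B : I -> set R),
    uniq J -> (forall i, i \in J -> measurable (B i)) ->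
    P (\bigcap_(i in [set` J]) (X i @^-1` B i)) =
    (\big[*%E/1%E]_(i <- J) P (X i @^-1` B i))%E.

Definition std_gaussian d (T : measurableType d) (R : realType)
  (P : probability T R) (X : T -> R) : Prop :=
  forall A : set R, measurable A -> P (X @^-1` A) = normal_prob 0 1 A.

Definition tau (R : realType) (beta : R) (N : nat) (e : R) : R :=
  expR (beta * Num.sqrt (N%:R) * e).

From HB Require Import structures.
From mathcomp Require Import all_boot all_order all_algebra.
From mathcomp Require Import all_classical all_reals all_analysis.
From mathcomp Require Import ring lra measurable_realfun.
Set Implicit Arguments. Unset Strict Implicit. Unset Printing Implicit Defensive.
Import Order.TTheory GRing.Theory Num.Theory.
Local Open Scope classical_set_scope.
Local Open Scope ring_scope.

(* Call [x] bad if every sphere of radius [r = 1, ..., K] around [x] contains a point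
   [y] with [E_y > t]. Choosing one such point per sphere, a union bound over [x] and
   over the choices, the independence of the [K] distinct chosen [E_y] and the Gaussian
   tail [P(E > t) <= 2 exp(-t^2/4)] bound the probability that some [x] is bad by
   [2^N (N^K)^K (2 exp(-t^2/4))^K]. For [t = ln 2 / (2 beta) N^(1/2 - delta)], the level
   at which [tau_y = 2^(N^(1-delta)/2)], and [K = floor(N^(3 delta))], the exponent
   [K t^2/4 ~ N^(1+delta)] beats [N + K^2 ln N ~ N + N^(6 delta) ln N], so this is
   eventually at most [2^-(N+1)], and Borel-Cantelli concludes. *)

Lemma normal_peak1_le (R : realType) : normal_peak (1 : R) <= 2 * normal_peak (Num.sqrt 2).
Proof.
rewrite /normal_peak sqr_sqrtr // expr1n mul1r.
have pi_pos : (0 : R) < pi by exact: pi_gt0.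
have -> : (2 * pi *+ 2 : R) = 2 ^+ 2 * pi by rewrite -mulr_natr; ring.
rewrite sqrtrM ?sqrtr_sqr ?ger0_norm ?sqr_ge0 // invfM mulrA divff // mul1r.
have two_pi_gt0 : (0 : R) < pi *+ 2 by rewrite mulrn_wgt0.
rewrite lef_pV2 ?posrE ?sqrtr_gt0 // ler_sqrt; last exact: ltW.
by rewrite -mulr_natr; lra.
Qed.

(* Pointwise, the standard density is at most [2 expR (- t^2/4)] times the density of
   variance 2 on [x > t >= 0]; the latter has total mass 1. *)
Lemma normal_prob_tail_le (R : realType) (t : R) : 0 <= t ->
  (normal_prob 0 1 `]t, +oo[%classic <= (2 * expR (- (t ^+ 2) / 4))%:E)%E.
Proof.
move=> t_ge0; set c := 2 * expR (- (t ^+ 2) / 4); rewrite /normal_prob.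
have c_ge0 : 0 <= c by rewrite mulr_ge0 ?expR_ge0.
apply: (@le_trans _ _ (\int[lebesgue_measure]_(x in `]t, +oo[%classic)
   (c%:E * (normal_pdf 0 (Num.sqrt 2) x)%:E))%E).
  apply: ge0_le_integral => //.
  - by move=> x _; rewrite lee_fin normal_pdf_ge0.
  - by apply/measurable_funTS/measurable_EFinP; exact: measurable_normal_pdf.
  - apply/measurable_funTS/measurable_EFinP/measurable_funM => //.
    exact: measurable_normal_pdf.
  move=> x /=; rewrite in_itv /= andbT => t_lt_x.
  have sqrt2_neq0 : Num.sqrt (2 : R) != 0 by rewrite gt_eqF // sqrtr_gt0.
  rewrite -EFinM lee_fin !normal_pdfE ?oner_neq0 // /normal_fun !subr0 sqr_sqrtr // expr1n.
  have t2x2 : t ^+ 2 <= x ^+ 2.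
    by rewrite ler_sqr ?nnegrE ?(ltW t_lt_x) ?(le_trans t_ge0 (ltW t_lt_x)).
  have -> : (2 : R) *+ 2 = 4 by rewrite -mulr_natr; ring.
  have -> : c * (normal_peak (Num.sqrt 2) * expR (- x ^+ 2 / 4)) =
      (2 * normal_peak (Num.sqrt 2)) * expR (- t ^+ 2 / 4 + - x ^+ 2 / 4).
    by rewrite /c expRD; ring.
  apply: ler_pM.
  - exact: normal_peak_ge0.
  - exact: expR_ge0.
  - exact: normal_peak1_le.
  - rewrite ler_expR; lra.
rewrite ge0_integralZl //; last 2 first.
- by apply/measurable_funTS/measurable_EFinP; exact: measurable_normal_pdf.
- by move=> x _; rewrite lee_fin normal_pdf_ge0.
rewrite -[leRHS]mule1 lee_pmul ?lee_fin //.
  by apply: integral_ge0 => x _; rewrite lee_fin normal_pdf_ge0.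
exact: (@probability_le1 _ _ _ (normal_prob 0 (Num.sqrt 2))).
Qed.

Lemma ffact_le_expn n k : (n ^_ k <= n ^ k)%N.
Proof.
rewrite ffact_prod; apply: leq_trans (_ : \prod_(i < k) n <= _)%N.
  by apply: leq_prod => i _; exact: leq_subr.
by rewrite prod_nat_const card_ord.
Qed.

Lemma bin_le_expn n k : ('C(n, k) <= n ^ k)%N.
Proof.
apply: leq_trans (ffact_le_expn n k); rewrite -bin_ffact leq_pmulr //; exact: fact_gt0.
Qed.

Definition sphere (N : nat) (x : cube N) (k : nat) : pred (cube N) :=
  [pred y | hamming x y == k].

(* A point of the sphere is determined by the set of coordinates where it differs from [x]. *)
Lemma card_sphere N (x : cube N) k : (#|sphere x k| <= N ^ k)%N.
Proof.
pose diff (y : cube N) := [set i | x i != y i]%SET.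
have diff_inj : injective diff.
  move=> y1 y2 eq_diff; apply/ffunP => i.
  have := congr1 (fun S : {set 'I_N} => i \in S) eq_diff.
  by rewrite /diff !inE; case: (x i); case: (y1 i); case: (y2 i).
rewrite -(card_imset (mem (sphere x k)) diff_inj).
apply: leq_trans (bin_le_expn N k); rewrite -[N in 'C(N, _)]card_ord -card_draws.
apply: subset_leq_card; apply/fintype.subsetP => S /imsetP[y y_k ->].
by rewrite inE /diff cardsE.
Qed.

Lemma card_cube N : #|cube N| = (2 ^ N)%N.
Proof. by rewrite card_ffun card_bool card_ord. Qed.

Lemma card_family_sphere N K (x : cube N) :
  (#|family (fun r : 'I_K => sphere x r.+1)| <= (N ^ K) ^ K)%N.
Proof.
rewrite card_family.
have -> : foldr muln 1 [seq #|sphere x r.+1| | r : 'I_K] = \prod_(r < K) #|sphere x r.+1|.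
  by rewrite foldrE big_map enumT.
rewrite -[K in (_ ^ K)%N](card_ord K) -prod_nat_const.
apply: leq_prod => r _; apply: leq_trans (card_sphere x r.+1) _.
by have [->|N_gt0] := posnP N; [rewrite exp0n | rewrite leq_pexp2l].
Qed.

Lemma measure_bigsetU_le d (T : measurableType d) (R : realType)
    (mu : {measure set T -> \bar R}) (I : Type) (r : seq I) (Pr : pred I) (A : I -> set T) :
  (forall i, Pr i -> measurable (A i)) ->
  (mu (\big[setU/set0]_(i <- r | Pr i) A i) <= \sum_(i <- r | Pr i) mu (A i))%E.
Proof.
move=> mA; elim: r => [|a r IH]; first by rewrite !big_nil measure0.
rewrite !big_cons; case: ifP => // Pa.
apply: le_trans (measureU2 _ _ _) _; [exact: mA | exact: bigsetU_measurable |].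
exact: leeD.
Qed.

Lemma prode_le_expr (R : realType) (I : Type) (r : seq I) (p : I -> \bar R) (q : R) :
  (forall i, (0 <= p i <= q%:E)%E) -> (\prod_(i <- r) p i <= (q ^+ size r)%:E)%E.
Proof.
move=> p_bnd; elim: r => [|a r IH]; first by rewrite big_nil.
rewrite big_cons exprS EFinM; have /andP[pa_ge0 pa_le] := p_bnd a.
apply: lee_pmul => //; apply: prode_ge0 => i _.
by have /andP[] := p_bnd i.
Qed.

Lemma borel_cantelli_half d (T : measurableType d) (R : realType)
    (mu : {measure set T -> \bar R}) (F : (set T)^nat) :
  (forall n, measurable (F n)) ->
  (\forall n \near \oo, mu (F n) <= (1 / (2 ^ n.+1)%:R)%:E)%E ->
  {ae mu, forall w, exists n0, forall n, (n0 <= n)%N -> ~ F n w}.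
Proof.
move=> mF [n0 _ F_small].
pose G n := if (n0 <= n)%N then F n else set0.
have mG n : measurable (G n) by rewrite /G; case: ifP.
have G_summable : (\sum_(0 <= n <oo) mu (G n) < +oo)%E.
  apply: (@le_lt_trans _ _ (\sum_(0 <= n <oo) ((1 / (2 ^ (n + 1))%:R)%:E))%E).
    apply: lee_nneseries => [n _ _ | n _]; first exact: measure_ge0.
    rewrite /G addn1; case: ifP => [/F_small // | _].
    by rewrite measure0 lee_fin divr_ge0.
  suff -> : (\sum_(0 <= n <oo) ((1 / (2 ^ (n + 1))%:R)%:E) = 1%:E :> \bar R)%E by exact: ltry.
  have half_series := @cvg_geometric_eseries_half R 1 0.
  by rewrite expr0 divr1 in half_series; exact: (cvg_lim _ half_series).
exists (lim_sup_set G); split.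
- apply: bigcap_measurable => // k _.
  by apply: bigcup_measurable => j _; exact: mG.
- exact: lim_sup_set_cvg0.
move=> w /= not_ev; rewrite /lim_sup_set => n _.
apply: contrapT => not_G; apply: not_ev.
exists (maxn n n0) => m; rewrite geq_max => /andP[n_m n0_m] Fmw.
by apply: not_G; exists m => //; rewrite /G n0_m.
Qed.

Lemma ln_le_powR (R : realType) (x e : R) : 0 < x -> 0 < e -> ln x <= x `^ e / e.
Proof.
move=> x_gt0 e_gt0; rewrite ler_pdivlMr // mulrC -ln_powR.
have := @le_ln1Dx R (x `^ e - 1); rewrite addrCA subrr addr0 => ln_le.
by apply: le_trans (ln_le _) _; have := powR_gt0 e x_gt0; lra.
Qed.

Lemma eventually_le_powR (R : realType) (c b e1 e2 : R) : 0 < b -> e1 < e2 ->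
  \forall N \near \oo, c * N%:R `^ e1 <= b * N%:R `^ e2.
Proof.
move=> b_gt0 e12; set g := e2 - e1; have g_gt0 : 0 < g by rewrite subr_gt0.
set m := Num.max (c / b) 1; set y := m `^ g^-1.
have m_ge1 : 1 <= m by rewrite le_max lexx orbT.
have mE : m = y `^ g by rewrite /y -powRrM mulVf ?gt_eqF // powRr1 // (le_trans _ m_ge1).
near=> N.
have y_le : y <= N%:R by near: N; exact: nbhs_infty_ger.
have N_gt0 : (0 < N)%N by near: N; exact: nbhs_infty_gt.
have -> : e2 = g + e1 by rewrite /g; ring.
rewrite powRD; last by rewrite pnatr_eq0 -lt0n N_gt0 implybT.
rewrite mulrA ler_wpM2r ?powR_ge0 //.
apply: (@le_trans _ _ (b * m)).
  by rewrite -ler_pdivrMl // mulrC le_max lexx.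
rewrite ler_pM2l // mE.
by apply: (ge0_ler_powR (ltW g_gt0) _ _ y_le); rewrite nnegrE ?powR_ge0.
Unshelve. all: by end_near.
Qed.

Lemma eventually_powR_ln_le (R : realType) (c e1 e2 : R) : 0 < c -> e1 < e2 ->
  \forall N \near \oo, N%:R `^ e1 * ln N%:R <= c * N%:R `^ e2.
Proof.
move=> c_gt0 e12; set eps := (e2 - e1) / 2; have eps_gt0 : 0 < eps by rewrite /eps; lra.
near=> N.
have N_gt0 : (0 : R) < N%:R by rewrite ltr0n; near: N; exact: nbhs_infty_gt.
have power_le : eps^-1 * N%:R `^ (e1 + eps) <= c * N%:R `^ e2.
  by near: N; apply: eventually_le_powR => //; rewrite /eps; lra.
apply: le_trans (ler_wpM2l (powR_ge0 _ _) (ln_le_powR N_gt0 eps_gt0)) _.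
rewrite mulrA -powRD; last by rewrite (gt_eqF N_gt0) implybT.
by rewrite mulrC.
Unshelve. all: by end_near.
Qed.

Definition max_radius (R : realType) (delta : R) (N : nat) : nat :=
  Num.truncn (N%:R `^ (3 * delta)).

Lemma max_radius_le (R : realType) (delta : R) N :
  (max_radius delta N)%:R <= N%:R `^ (3 * delta).
Proof. by rewrite truncn_le powR_ge0. Qed.

(* With [k := max_radius delta N], [P := N^(1 - 2 delta)] and [A := a^2 / 12], each of
   the three terms on the left is eventually at most [k A P], because [ln 2 <= A P],
   [N^(3 delta) ln N <= A P] and [6 N ln 2 <= A N^(1 + delta)]; the middle estimate is
   the one that needs [5 delta < 1]. *)
Lemma max_radius_exponent_le (R : realType) (a delta : R) :
  0 < a -> 0 < delta -> 5 * delta < 1 ->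
  \forall N \near \oo,
    (max_radius delta N)%:R * ln 2 + (max_radius delta N)%:R ^+ 2 * ln N%:R
      + (N.*2.+1)%:R * ln 2
    <= (max_radius delta N)%:R * (a ^+ 2 * N%:R `^ (1 - 2 * delta)) / 4.
Proof.
move=> a_gt0 delta_gt0 delta_lt; set A := a ^+ 2 / 12.
have A_gt0 : 0 < A by rewrite divr_gt0 ?exprn_gt0.
have ln2_gt0 : (0 : R) < ln 2 by rewrite ln_gt0 // ltr1n.
near=> N.
have n_ge1 : 1 <= (N%:R : R) by near: N; exact: nbhs_infty_ger.
have ln2_le : ln 2 * N%:R `^ 0 <= A * N%:R `^ (1 - 2 * delta).
  by near: N; apply: eventually_le_powR => //; lra.
have x_ln_le : N%:R `^ (3 * delta) * ln N%:R <= A * N%:R `^ (1 - 2 * delta).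
  by near: N; apply: eventually_powR_ln_le => //; lra.
have lin_le : 6 * ln 2 * N%:R `^ 1 <= A * N%:R `^ (1 + delta).
  by near: N; apply: eventually_le_powR => //; lra.
have k_le_x := max_radius_le delta N.
set n := (N%:R : R) in n_ge1 ln2_le x_ln_le lin_le k_le_x *.
set x := n `^ (3 * delta) in x_ln_le k_le_x *.
set P := n `^ (1 - 2 * delta) in ln2_le x_ln_le *.
set k := ((max_radius delta N)%:R : R) in k_le_x *.
have x_ge1 : 1 <= x by rewrite -(powRr0 n) ler_powR //; lra.
have x_lt_k1 : x < k + 1 by rewrite natr1; exact: truncnS_gt.
have k_ge1 : 1 <= k by rewrite ler1n truncn_gt0.
have xP : n `^ (1 + delta) = x * P.
  have n_gt0 : 0 < n by lra.
  by rewrite -powRD ?(gt_eqF n_gt0) ?implybT //; congr (_ `^ _); ring.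
rewrite powRr0 mulr1 in ln2_le; rewrite powRr1 ?xP in lin_le; last lra.
have AP_ge0 : 0 <= A * P by rewrite mulr_ge0 ?powR_ge0 ?ltW.
have h1 : k * ln 2 <= k * (A * P) by rewrite ler_wpM2l //; lra.
have h2 : k * (k * ln n) <= k * (A * P).
  apply: ler_wpM2l; first lra.
  by apply: le_trans x_ln_le; rewrite ler_wpM2r // ln_ge0.
have h3 : x * (A * P) <= (2 * k) * (A * P) by rewrite ler_wpM2r //; lra.
have -> : (N.*2.+1%:R : R) = 2 * n + 1 by rewrite -addn1 -muln2 natrD natrM mulrC.
have -> : k ^+ 2 * ln n = k * (k * ln n) by rewrite mulrA.
have : ln 2 <= ln 2 * n by rewrite ler_peMr //; lra.
rewrite /A in h1 h2 h3 lin_le *; lra.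
Unshelve. all: by end_near.
Qed.

Lemma exprn_expR (R : realType) (x : R) n : 0 < x -> x ^+ n = expR (n%:R * ln x).
Proof. by move=> x_gt0; rewrite expRM_natl lnK. Qed.

Lemma tail_count_le (R : realType) (s : R) (K N : nat) : (0 < N)%N ->
  K%:R * ln 2 + K%:R ^+ 2 * ln N%:R + (N.*2.+1)%:R * ln 2 <= K%:R * s / 4 ->
  (2 * expR (- s / 4)) ^+ K *+ (N ^ K) ^ K *+ 2 ^ N <= 1 / (2 ^ N.+1)%:R.
Proof.
move=> N_gt0 exponent_le.
have two_gt0 : (0 : R) < 2 by [].
have n_gt0 : (0 : R) < N%:R by rewrite ltr0n.
have lhsE : (2 * expR (- s / 4)) ^+ K *+ (N ^ K) ^ K *+ 2 ^ N =
    expR (K%:R * ln 2 - K%:R * s / 4 + K%:R ^+ 2 * ln N%:R + N%:R * ln 2).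
  rewrite -(mulr_natr _ (2 ^ N)) -(mulr_natr _ ((N ^ K) ^ K)) !natrX -exprM exprMn.
  rewrite !(exprn_expR _ two_gt0) (exprn_expR _ n_gt0) -expRM_natl -!expRD.
  by rewrite natrM; congr expR; ring.
rewrite lhsE natrX (exprn_expR _ two_gt0) div1r -expRN ler_expR.
have oddE : (N.*2.+1)%:R = 2 * N%:R + 1 :> R by rewrite -addn1 -mul2n natrD natrM.
have succE : (N.+1)%:R = N%:R + 1 :> R by rewrite -addn1 natrD.
by move: exponent_le; rewrite oddE succE; lra.
Qed.

Lemma tail_count_eventually_le (R : realType) (a delta : R) :
  0 < a -> 0 < delta -> 5 * delta < 1 ->
  \forall N \near \oo,
    (2 * expR (- (a * N%:R `^ (1 / 2 - delta)) ^+ 2 / 4)) ^+ max_radius delta N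
      *+ (N ^ max_radius delta N) ^ max_radius delta N *+ 2 ^ N
    <= 1 / (2 ^ N.+1)%:R.
Proof.
move=> a_gt0 delta_gt0 delta_lt; near=> N; apply: tail_count_le.
  by near: N; exact: nbhs_infty_gt.
have -> : (a * N%:R `^ (1 / 2 - delta)) ^+ 2 = a ^+ 2 * N%:R `^ (1 - 2 * delta).
  rewrite exprMn -[X in _ * X]powR_mulrn ?powR_ge0 // -powRrM.
  by congr (_ * _ `^ _); lra.
by near: N; exact: max_radius_exponent_le.
Unshelve. all: by end_near.
Qed.

Section bad_event.
Context d (T : measurableType d) (R : realType) (P : probability T R)
  (E : forall N : nat, cube N -> {RV P >-> R}).
Arguments E : clear implicits.

Let X (i : cube_index) : T -> R := E (tag i) (tagged i).

Definition sites {N K : nat} (f : {ffun 'I_K -> cube N}) : seq cube_index :=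
  [seq existT _ N (f r) | r <- enum 'I_K].

Definition exceed_event (t : R) {N K : nat} (f : {ffun 'I_K -> cube N}) : set T :=
  \bigcap_(i in [set` sites f]) (X i @^-1` `]t, +oo[).

Definition bad_event (t : R) N K : set T :=
  \big[setU/set0]_(x : cube N)
    \big[setU/set0]_(f in family (fun r : 'I_K => sphere x r.+1)) exceed_event t f.

Lemma measurable_exceed_event t {N K : nat} (f : {ffun 'I_K -> cube N}) :
  measurable (exceed_event t f).
Proof.
rewrite /exceed_event bigcap_seq; elim/big_ind: _ => //; first exact: measurableI.
by move=> i _; exact: measurable_funPTI.
Qed.

Lemma measurable_bad_event t N K : measurable (bad_event t N K).
Proof.
apply: bigsetU_measurable => x _; apply: bigsetU_measurable => f _.
exact: measurable_exceed_event.
Qed.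

Hypothesis gaussian : forall N (x : cube N), std_gaussian P (E N x).
Hypothesis independent : mutually_independent P X.

Lemma exceed_event_prob_le t {N K : nat} (f : {ffun 'I_K -> cube N}) :
  0 <= t -> injective f ->
  (P (exceed_event t f) <= ((2 * expR (- (t ^+ 2) / 4)) ^+ K)%:E)%E.
Proof.
move=> t_ge0 f_inj.
have uniq_sites : uniq (sites f).
  rewrite map_inj_uniq ?enum_uniq // => r1 r2.
  by move/(Eqdep_dec.inj_pair2_eq_dec _ PeanoNat.Nat.eq_dec _ _ _ _)/f_inj.
rewrite /exceed_event (independent (B := fun=> `]t, +oo[%classic) uniq_sites) //.
rewrite -[X in (_ <= (_ ^+ X)%:E)%E](size_enum_ord K) -(size_map (fun r => existT _ N (f r))).
apply: prode_le_expr => i; rewrite measure_ge0 gaussian //=.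
exact: normal_prob_tail_le.
Qed.

Lemma bad_event_prob_le t N K : 0 <= t ->
  (P (bad_event t N K) <=
    ((2 * expR (- (t ^+ 2) / 4)) ^+ K *+ (N ^ K) ^ K *+ 2 ^ N)%:E)%E.
Proof.
move=> t_ge0; set c := (2 * expR (- (t ^+ 2) / 4)) ^+ K.
have c_ge0 : 0 <= c by rewrite exprn_ge0 // mulr_ge0 ?expR_ge0.
apply: le_trans (measure_bigsetU_le P _ _) _.
  by move=> x _; apply: bigsetU_measurable => f _; exact: measurable_exceed_event.
apply: le_trans (@lee_sum _ _ _ (fun=> (c *+ (N ^ K) ^ K)%:E) _ _ _) _.
  move=> x _; apply: le_trans (measure_bigsetU_le P _ _) _.
    by move=> f _; exact: measurable_exceed_event.
  apply: le_trans (@lee_sum _ _ _ (fun=> c%:E) _ _ _) _.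
    move=> f /familyP f_sphere; apply: exceed_event_prob_le => // r1 r2 f12.
    by apply/val_inj/eqP; rewrite -eqSS -(eqP (f_sphere r1)) -(eqP (f_sphere r2)) f12.
  rewrite sumEFin sumr_const lee_fin -[leLHS]mulr_natr -[leRHS]mulr_natr.
  by rewrite ler_wpM2l // ler_nat card_family_sphere.
by rewrite sumEFin sumr_const card_cube.
Qed.

Lemma radii_of_not_bad t N K (w : T) : ~ bad_event t N K w ->
  exists rho : cube N -> nat, forall x,
    (0 < rho x <= K)%N /\ forall y, hamming x y = rho x -> E N y w <= t.
Proof.
move=> not_bad.
pose good x (r : 'I_K) := [forall y, (hamming x y == r.+1) ==> (E N y w <= t)].
exists (fun x => if [pick r | good x r] is Some r then r.+1 else 1%N) => x.
case: pickP => [r /forallP x_good | no_good].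
  split=> [|y xy_r]; first exact: ltn_ord.
  by apply: (implyP (x_good y)); rewrite xy_r.
exfalso; apply: not_bad.
have exceeds (r : 'I_K) : exists y, (hamming x y == r.+1) && (t < E N y w).
  have /forallPn[y] := negbT (no_good r).
  by rewrite negb_imply -ltNge => ?; exists y.
pose f := [ffun r : 'I_K => xchoose (exceeds r)].
have f_spec r : (hamming x (f r) == r.+1) && (t < E N (f r) w).
  by rewrite ffunE; exact: (xchooseP (exceeds r)).
rewrite /bad_event -bigcup_seq_cond; exists x; first by rewrite /= mem_index_enum.
rewrite -bigcup_seq_cond; exists f.
  by rewrite /= mem_index_enum; apply/familyP => r; case/andP: (f_spec r).
by move=> i /mapP[r _ ->]; rewrite /= in_itv /= andbT; case/andP: (f_spec r).
Qed.
End bad_event.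

Definition tail_level (R : realType) (beta delta : R) (N : nat) : R :=
  ln 2 / (2 * beta) * N%:R `^ (1 / 2 - delta).

Lemma tail_level_ge0 (R : realType) (beta delta : R) N :
  0 < beta -> 0 <= tail_level beta delta N.
Proof.
move=> beta_gt0; rewrite mulr_ge0 ?powR_ge0 // divr_ge0 ?mulr_ge0 ?ltW //.
by rewrite ln_gt0 // ltr1n.
Qed.

(* [beta sqrt N] times the level is [ln 2 / 2 * N^(1 - delta)]. *)
Lemma tau_le_of_le_level (R : realType) (beta delta e : R) N : 0 < beta -> (0 < N)%N ->
  e <= tail_level beta delta N -> tau beta N e <= 2 `^ (N%:R `^ (1 - delta) / 2).
Proof.
move=> beta_gt0 N_gt0 e_le; have n_gt0 : (0 : R) < N%:R by rewrite ltr0n.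
have pow2E y : (2 : R) `^ y = expR (y * ln 2) by rewrite /powR ifF // pnatr_eq0.
rewrite /tau pow2E ler_expR.
apply: le_trans (_ : beta * Num.sqrt N%:R * tail_level beta delta N <= _).
  by rewrite ler_wpM2l // mulr_ge0 ?sqrtr_ge0 ?ltW.
have -> : N%:R `^ (1 - delta) = N%:R `^ 2^-1 * N%:R `^ (1 / 2 - delta).
  rewrite -powRD; last by rewrite (gt_eqF n_gt0) implybT.
  by congr (_ `^ _); field.
rewrite /tail_level -(powR12_sqrt (ltW n_gt0)) le_eqVlt; apply/orP; left; apply/eqP.
by field; rewrite gt_eqF.
Qed.

Theorem lemma4p2 (d : measure_display) (T : measurableType d) (R : realType)
  (P : probability T R) (E : forall N : nat, cube N -> {RV P >-> R})
  (beta : R) (delta : R) :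
  (forall N (x : cube N), std_gaussian P (E N x)) ->
  mutually_independent P (fun i : cube_index => (E (tag i) (tagged i) : T -> R)) ->
  0 < beta ->
  0 < delta -> delta < 1 / 6 ->
  {ae P, forall w : T, exists N0 : nat, forall N : nat, (N0 <= N)%N ->
     exists rho : cube N -> nat,
       forall x : cube N,
         (1 <= rho x)%N /\ (rho x)%:R <= (N%:R) `^ (3 * delta) /\
         forall y : cube N, hamming x y = rho x ->
           tau beta N (E N y w) <= 2 `^ ((N%:R) `^ (1 - delta) / 2)}.
Proof.
move=> gaussian independent beta_gt0 delta_gt0 delta_lt.
pose bad N := bad_event E (tail_level beta delta N) N (max_radius delta N).
have a_gt0 : 0 < ln 2 / (2 * beta) by rewrite divr_gt0 ?mulr_gt0 // ln_gt0 // ltr1n.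
have bad_small : \forall N \near \oo, (P (bad N) <= (1 / (2 ^ N.+1)%:R)%:E)%E.
  near=> N; apply: le_trans (bad_event_prob_le gaussian independent _ _ _) _.
    exact: tail_level_ge0.
  by rewrite lee_fin; near: N; apply: tail_count_eventually_le => //; lra.
apply: filterS _ (borel_cantelli_half (fun N => measurable_bad_event E _ N _) bad_small).
move=> w [N0 not_bad]; exists (maxn N0 1) => N; rewrite geq_max => /andP[N0_le N_gt0].
have [rho rho_spec] := radii_of_not_bad (not_bad N N0_le).
exists rho => x; have [/andP[rho_gt0 rho_le] rho_level] := rho_spec x.
split=> //; split=> [|y xy_rho].
  by apply: le_trans (max_radius_le delta N); rewrite ler_nat.
exact: tau_le_of_le_level (rho_level y xy_rho).
Unshelve. all: by end_near.
Qed.
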